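(* Assume the axiom of choice. Let $A$ be a complete Boolean algebra. A map $\nu:A\to[0,\infty)$ is a continuous valuation if and only if it is a completely additive valuation.
   Context: A (positive) valuation on a distributive lattice $L$ is $\nu:L\to[0,\infty)$ with $\nu(0)=0$, $\nu(x)+\nu(y)=\nu(x\vee y)+\nu(x\wedge y)$, and $x\le y\Rightarrow\nu(x)\le\nu(y)$; it is continuous if it preserves existing suprema of directed subsets. A completely additive valuation is a valuation $\nu$ such that for every family $\{x_i\}_{i\in I}$ of pairwise disjoint elements ($x_i\wedge x_j=0$ for $i\neq j$) whose supremum exists, $\nu(\sup_i x_i)=\sum_{i\in I}\nu(x_i)$ with the sum converging absolutely. *)

From HB Require Import structures.
From mathcomp Require Import all_boot all_order all_algebra.
From mathcomp Require Import all_classical all_reals.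
From mathcomp Require Import ereal esum.
Set Implicit Arguments. Unset Strict Implicit. Unset Printing Implicit Defensive.
Import Order.TTheory GRing.Theory Num.Theory.
Local Open Scope classical_set_scope.
Local Open Scope ring_scope.

Definition is_sup {d} {T : porderType d} (S : set T) (x : T) : Prop :=
  (forall y, S y -> (y <= x)%O) /\
  (forall z, (forall y, S y -> (y <= z)%O) -> (x <= z)%O).

Definition complete {d} (T : porderType d) : Prop :=
  forall S : set T, exists x, is_sup S x.

Definition directed {d} {T : porderType d} (D : set T) : Prop :=
  (exists x, D x) /\
  (forall x y, D x -> D y -> exists2 z, D z & ((x <= z)%O /\ (y <= z)%O)).

Definition valuation {d} {L : bDistrLatticeType d} {R : realType} (nu : L -> R) : Prop :=
  [/\ forall x, 0 <= nu x,
      nu \bot%O = 0,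
      (forall x y, nu x + nu y = nu (x `|` y)%O + nu (x `&` y)%O) &
      (forall x y, (x <= y)%O -> nu x <= nu y)].

Definition continuous_valuation {d} {L : bDistrLatticeType d} {R : realType}
    (nu : L -> R) : Prop :=
  valuation nu /\
  (forall (D : set L) (s : L), directed D -> is_sup D s -> is_sup (nu @` D) (nu s)).

(* Completely additive: for every pairwise disjoint family (x_i)_{i in I} with
   an existing supremum s, nu s = sum_i nu (x_i), the (unordered) sum of the
   nonnegative family converging (absolutely) -- expressed via esum being the
   finite value nu s. *)
Definition completely_additive_valuation {d} {L : bDistrLatticeType d} {R : realType}
    (nu : L -> R) : Prop :=
  valuation nu /\
  (forall (I : choiceType) (x : I -> L) (s : L),
     (forall i j, i <> j -> (x i `&` x j)%O = \bot%O) ->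
     is_sup (range x) s ->
     esum [set: I] (fun i => (nu (x i))%:E) = (nu s)%:E).

From HB Require Import structures.
From mathcomp Require Import all_boot all_order all_algebra.
From mathcomp Require Import all_classical all_reals.
From mathcomp Require Import ereal esum finmap.
Set Implicit Arguments. Unset Strict Implicit. Unset Printing Implicit Defensive.
Import Order.TTheory GRing.Theory Num.Theory.
Local Open Scope classical_set_scope.
Local Open Scope ring_scope.

(* For a disjoint family, the esum of nu is the supremum of nu over the
   directed set of finite joins, by finite additivity; so continuity gives
   complete additivity.  Conversely, given a directed D with supremum s, Zorn's
   lemma yields a maximal disjoint family M of elements below members of D.  Its
   supremum t is above s: for e in D not below t, e `&` ~` t is nonzero and
   could be added to M.  Hence nu s <= nu t = sum_{a in M} nu a, and each finite
   partial sum is nu of a finite join, which lies below some e in D because D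
   is directed. *)

Section DisjointFamilies.
Context {d : Order.disp_t} {L : bDistrLatticeType d}.

Definition pairwise_disjoint (M : set L) : Prop :=
  forall a b, M a -> M b -> a <> b -> (a `&` b = \bot)%O.

Definition partial_join (I : choiceType) (x : I -> L) (X : set I) : L :=
  (\join_(i <- fset_set X) x i)%O.

Definition finite_joins (I : choiceType) (x : I -> L) : set L :=
  partial_join x @` finite_set.

Lemma valuation_le {R : realType} (nu : L -> R) a b :
  valuation nu -> (a <= b)%O -> nu a <= nu b.
Proof. by move=> [_ _ _ mono] /mono. Qed.

Lemma meet_bigjoin_eq0 (I : eqType) (a : L) (s : seq I) (x : I -> L) :
  (forall j, j \in s -> (a `&` x j = \bot)%O) ->
  (a `&` \join_(j <- s) x j = \bot)%O.
Proof.
elim: s => [|i s IH] H; first by rewrite big_nil meetx0.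
rewrite big_cons meetUr H ?mem_head // IH ?joinx0 // => j js.
by apply: H; rewrite in_cons js orbT.
Qed.

Lemma valuation_bigjoin {R : realType} (nu : L -> R) (I : eqType) (x : I -> L)
    (s : seq I) :
  valuation nu -> uniq s ->
  (forall i j, i <> j -> (x i `&` x j)%O = \bot%O) ->
  nu (\join_(i <- s) x i)%O = \sum_(i <- s) nu (x i).
Proof.
move=> [_ nu0 numod _]; elim: s => [|i s IH] /=; first by rewrite !big_nil nu0.
move=> /andP[iNs us] dis; rewrite !big_cons -IH //.
rewrite numod meet_bigjoin_eq0 ?nu0 ?addr0 // => j js.
by apply: dis => ij; move: iNs; rewrite ij js.
Qed.

Section FiniteJoins.
Variables (I : choiceType) (x : I -> L).

Lemma directed_finite_joins : directed (finite_joins x).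
Proof.
split; first by exists (partial_join x set0); exists set0 => //; exact: finite_set0.
move=> _ _ [X fX <-] [Y fY <-].
have fXY : finite_set (X `|` Y) by rewrite finite_setU.
exists (partial_join x (X `|` Y)); first by exists (X `|` Y).
split; apply/joinsP_seq => i + _; rewrite in_fset_set // => Hi;
  by apply: joins_sup_seq => //; rewrite in_fset_set // in_setU Hi ?orbT.
Qed.

Lemma is_sup_finite_joins s : is_sup (range x) s -> is_sup (finite_joins x) s.
Proof.
move=> [x_ub x_least]; split.
  by move=> _ [X _ <-]; apply/joinsP_seq => i _ _; apply: x_ub; exists i.
move=> z z_ub; apply: x_least => _ [i _ <-].
have Ji : finite_joins x (partial_join x [set i]).
  by exists [set i] => //; exact: finite_set1.
by apply: le_trans (z_ub _ Ji); apply: joins_sup_seq => //; rewrite fset_set1 inE.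
Qed.

Variables (R : realType) (nu : L -> R).
Hypotheses (nuv : valuation nu)
  (dis : forall i j, i <> j -> (x i `&` x j)%O = \bot%O).

Lemma fsum_valuation X : finite_set X ->
  (\sum_(i \in X) (nu (x i))%:E)%E = (nu (partial_join x X))%:E.
Proof.
move=> fX; rewrite fsbig_finite // sumEFin.
by rewrite /partial_join (valuation_bigjoin nuv _ dis) // fset_uniq.
Qed.

Lemma le_esum_valuation X : finite_set X ->
  ((nu (partial_join x X))%:E <= esum [set: I] (fun i => (nu (x i))%:E))%E.
Proof. by move=> fX; rewrite -fsum_valuation //; apply: ereal_sup_ubound; exists X. Qed.

Lemma esum_valuation_le z :
  (forall X, finite_set X -> nu (partial_join x X) <= z) ->
  (esum [set: I] (fun i => (nu (x i))%:E) <= z%:E)%E.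
Proof.
by move=> le_z; apply: ge_ereal_sup => _ [X [fX _] <-]; rewrite fsum_valuation // lee_fin le_z.
Qed.

End FiniteJoins.

Lemma continuous_completely_additive {R : realType} (nu : L -> R) :
  continuous_valuation nu -> completely_additive_valuation nu.
Proof.
move=> [nuv cont]; split => // I x s dis xs.
have [nu_ub nu_least] :=
  cont _ _ (directed_finite_joins x) (is_sup_finite_joins xs).
have le_s : (esum [set: I] (fun i => (nu (x i))%:E) <= (nu s)%:E)%E.
  by apply: esum_valuation_le => // X fX; apply: nu_ub; exists (partial_join x X) => //; exists X.
have ge0 : (0 <= esum [set: I] (fun i => (nu (x i))%:E))%E.
  by apply: esum_ge0 => i _; rewrite lee_fin; case: nuv.
move: le_s ge0; case E : esum => [r| |] //= le_s _.
apply/eqP; rewrite eq_le le_s lee_fin.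
apply: nu_least => _ [_ [X fX <-] <-].
by rewrite -lee_fin -E le_esum_valuation.
Qed.

Lemma bigjoin_le_directed (I : eqType) (D : set L) (x : I -> L) (l : seq I) :
  directed D -> (forall i, exists2 e, D e & (x i <= e)%O) ->
  exists2 e, D e & (\join_(i <- l) x i <= e)%O.
Proof.
move=> [[e0 De0] dirD] xD; elim: l => [|i l [e De le]].
  by exists e0 => //; rewrite big_nil le0x.
have [f Df lf] := xD i; have [g Dg [eg fg]] := dirD _ _ De Df.
exists g => //; rewrite big_cons leUx (le_trans lf fg).
exact: le_trans le eg.
Qed.

Lemma exists_maximal_disjoint (Q : set L) :
  exists M, [/\ M `<=` Q, pairwise_disjoint M &
    forall B, M `<` B -> B `<=` Q -> ~ pairwise_disjoint B].
Proof.
pose P M := M `<=` Q /\ pairwise_disjoint M.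
have [M [[MQ Mdis] Mmax]] : exists M, P M /\ forall B, M `<` B -> ~ P B.
  apply: Zorn_bigcup => F FP Ftot; split; first by move=> a [X /FP[XQ _] /XQ].
  move=> a b [X FX Xa] [Y FY Yb].
  have [XY|YX] := Ftot X Y FX FY.
    by apply: (FP Y FY).2 => //; exact: XY.
  by apply: (FP X FX).2 => //; exact: YX.
by exists M; split => // B MB BQ Bdis; exact: (Mmax _ MB (conj BQ Bdis)).
Qed.

(* Indexed by L itself and vanishing off M, so that no subtype index is needed. *)
Definition family_of_set (M : set L) (a : L) : L :=
  if `[< M a >] then a else \bot%O.

Lemma family_of_set_disjoint M : pairwise_disjoint M ->
  forall a b, a <> b -> (family_of_set M a `&` family_of_set M b = \bot)%O.
Proof.
move=> Mdis a b ab; rewrite /family_of_set.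
by case: asboolP => Ma; case: asboolP => Mb; rewrite ?meet0x ?meetx0 //; exact: Mdis.
Qed.

End DisjointFamilies.

Section Complemented.
Import Order.CTBDistrLatticeTheory.
Context {d : Order.disp_t} {L : ctbDistrLatticeType d}.

Lemma meet_diff_eq0 (a e t : L) : (a <= t)%O -> (a `&` (e `&` ~` t) = \bot)%O.
Proof.
move=> le_at; apply/eqP; rewrite -lex0 -(meetxC t).
by rewrite lexI (leIxl _ le_at) leIxr // leIr.
Qed.

Lemma maximal_disjoint_le (Q M : set L) (t e : L) :
  M `<=` Q -> pairwise_disjoint M ->
  (forall B, M `<` B -> B `<=` Q -> ~ pairwise_disjoint B) ->
  (forall a, M a -> (a <= t)%O) ->
  (forall a, (a <= e)%O -> Q a) -> (e <= t)%O.
Proof.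
move=> MQ Mdis Mmax Mt eQ; apply/negPn/negP => et.
set f := (e `&` ~` t)%O.
have fn0 : f != \bot%O by rewrite /f disj_leC complK.
have Mf_disj a : M a -> (a `&` f = \bot)%O by move=> /Mt; exact: meet_diff_eq0.
have NMf : ~ M f by move=> /Mf_disj; rewrite meetxx => f0; rewrite f0 eqxx in fn0.
apply: (Mmax (M `|` [set f])).
- by split=> [a|/(_ f (or_intror erefl))//]; left.
- by move=> a [/MQ//|->]; apply: eQ; exact: leIl.
move=> a b [Ma|->] [Mb|->] ab //; first exact: Mdis.
  exact: Mf_disj.
by rewrite meetC; exact: Mf_disj.
Qed.

Lemma completely_additive_continuous {R : realType} (nu : L -> R) :
  complete L -> completely_additive_valuation nu -> continuous_valuation nu.
Proof.
move=> compL [nuv ca]; split => // D s dirD [s_ub s_least].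
split; first by move=> _ [e De <-]; apply: valuation_le nuv _; exact: s_ub.
move=> z z_ub.
pose Q := [set a | exists2 e, D e & (a <= e)%O].
have [M [MQ Mdis Mmax]] := exists_maximal_disjoint Q.
pose x := family_of_set M.
have [t [x_ub x_least]] := compL (range x).
have Mt a : M a -> (a <= t)%O.
  by move=> Ma; apply: x_ub; exists a => //; rewrite /x /family_of_set asboolT.
have st : (s <= t)%O.
  by apply: s_least => e De; apply: maximal_disjoint_le MQ Mdis Mmax Mt _ => a ae; exists e.
have xD i : exists2 e, D e & (x i <= e)%O.
  rewrite /x /family_of_set; case: asboolP => [/MQ //|_].
  by have [[e0 De0] _] := dirD; exists e0 => //; exact: le0x.
apply: le_trans (valuation_le nuv st) _.
rewrite -lee_fin -(ca _ x t (family_of_set_disjoint Mdis) (conj x_ub x_least)).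
apply: esum_valuation_le => // [|X _]; first exact: family_of_set_disjoint.
have [e De le] := bigjoin_le_directed (fset_set X) dirD xD.
by apply: le_trans (valuation_le nuv le) _; apply: z_ub; exists e.
Qed.

End Complemented.

Theorem mainTheorem15 (d : Order.disp_t) (A : ctbDistrLatticeType d) (R : realType)
    (nu : A -> R) :
  complete A ->
  (continuous_valuation nu <-> completely_additive_valuation nu).
Proof.
move=> compA; split; [exact: continuous_completely_additive |].
exact: completely_additive_continuous.
Qed.
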